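(* Let $\mathcal{H}$ be a real Hilbert space and let $\phi:\mathcal{H}\to(-\infty,+\infty]$ be a function such that $\phi+\tfrac12\|\cdot\|^2\in\Gamma_0(\mathcal{H})$. Then for every $\delta>0$, the proximity operator of the $(\delta+1)^{-1}$-weakly convex function $\phi/(\delta+1)$ is single-valued and $$\mathrm{s\text{-}Prox}_{\phi/(\delta+1)}=\big[\mathbf{Prox}_{\phi}^{-1}+\delta\,\mathrm{Id}\big]^{-1}\circ(\delta+1)\mathrm{Id}.$$
   Context: $\Gamma_0(\mathcal{H})$ is the set of proper lower semicontinuous convex functions $\mathcal{H}\to(-\infty,+\infty]$. $\mathrm{Id}$ is the identity on $\mathcal{H}$. For a proper function $g$ and $\gamma>0$, $\mathbf{Prox}_{\gamma g}:\mathcal{H}\to2^{\mathcal{H}}$, $x\mapsto\operatorname{argmin}_{y\in\mathcal{H}}\big(g(y)+\frac{1}{2\gamma}\|x-y\|^2\big)$; when this set is a singleton for every $x$, the resulting single-valued map $\mathcal{H}\to\mathcal{H}$ is denoted $\mathrm{s\text{-}Prox}_{\gamma g}$. The inverse of a set-valued operator $\mathsf{T}$ is $\mathsf{T}^{-1}(y)=\{x\in\mathcal{H}: y\in\mathsf{T}(x)\}$, and the sum of set-valued operators is $(\mathsf{T}+\delta\mathrm{Id})(x)=\{u+\delta x: u\in\mathsf{T}(x)\}$. *)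

From HB Require Import structures.
From mathcomp Require Import all_boot all_order all_algebra.
From mathcomp Require Import all_classical all_reals all_analysis.
Set Implicit Arguments. Unset Strict Implicit. Unset Printing Implicit Defensive.
Import Order.TTheory GRing.Theory Num.Theory.
Import numFieldNormedType.Exports.
Local Open Scope classical_set_scope.
Local Open Scope ring_scope.

(* The norm of the normed module H is induced by the real inner product ip.
   Together with completeness (completeNormedModType) this makes H a real
   Hilbert space. *)
Definition is_inner_product {R : realType} {H : normedModType R}
  (ip : H -> H -> R) : Prop :=
  (forall x y, ip x y = ip y x) /\
  (forall (a : R) (x y z : H), ip (a *: x + y) z = a * ip x z + ip y z) /\
  (forall x, `|x| ^+ 2 = ip x x).

Definition convex_ext {R : realType} {H : normedModType R}
  (f : H -> \bar R) : Prop :=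
  forall (x y : H) (t : R), 0 < t < 1 ->
    (f (t *: x + (1 - t) *: y)%R <= t%:E * f x + (1 - t)%:E * f y)%E.

Definition proper_ext {R : realType} {H : normedModType R}
  (f : H -> \bar R) : Prop :=
  (forall x, f x != -oo%E) /\ (exists x, f x != +oo%E).

Definition Gamma0 {R : realType} {H : normedModType R}
  (f : H -> \bar R) : Prop :=
  proper_ext f /\ lower_semicontinuous f /\ convex_ext f.

Definition Prox {R : realType} {H : normedModType R}
  (gamma : R) (g : H -> \bar R) (x : H) : set H :=
  [set y | forall z : H,
     (g y + ((2 * gamma)^-1 * `|x - y| ^+ 2)%:E
      <= g z + ((2 * gamma)^-1 * `|x - z| ^+ 2)%:E)%E].

Definition op_inv {H : Type} (T : H -> set H) : H -> set H :=
  fun y => [set x | T x y].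

Definition op_add_scaled_id {R : realType} {H : normedModType R}
  (T : H -> set H) (delta : R) : H -> set H :=
  fun x => [set u + delta *: x | u in T x].

From HB Require Import structures.
From mathcomp Require Import all_boot all_order all_algebra.
From mathcomp Require Import all_classical all_reals all_analysis.
From mathcomp Require Import ring lra.
Import Order.TTheory GRing.Theory Num.Theory.
Import numFieldNormedType.Exports.
Local Open Scope classical_set_scope.
Local Open Scope ring_scope.

(* With c = delta + 1, Prox_{phi/c}(x) is the set of minimisers of
   g(z) = phi(z) + (c/2)|x - z|^2, and g is the sum of the convex function
   phi + |.|^2/2 and of q(z) = (c/2)|x - z|^2 - |z|^2/2, which the
   parallelogram identity shows to be delta-strongly convex.  A proper lsc
   strongly convex function on a Hilbert space has exactly one minimiser: it
   is bounded below, the midpoint inequality makes every minimising sequence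
   Cauchy, and lower semicontinuity makes the limit a minimiser.  On the other
   side, y lies in [Prox_phi^{-1} + delta Id]^{-1}(c x) iff
   y is in Prox_phi(c x - delta y), which expands to the quadratic growth
   condition g(y) + (delta/2)|y - z|^2 <= g(z) for all z; for a
   delta-strongly convex g this condition characterises the minimisers. *)

Definition argmin {T : Type} {R : realType} (f : T -> \bar R) : set T :=
  [set y | forall z, (f y <= f z)%E].

Definition strongly_convex {R : realType} {H : normedModType R}
  (m : R) (f : H -> \bar R) : Prop :=
  forall (a b : H) (t : R), 0 < t < 1 ->
    (f (t *: a + (1 - t) *: b)%R + (m / 2 * (t * (1 - t)) * `|a - b| ^+ 2)%:E
      <= t%:E * f a + (1 - t)%:E * f b)%E.

Lemma subr_affine (R : pzRingType) (V : lmodType R) (x a b : V) (t : R) :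
  x - (t *: a + (1 - t) *: b) = t *: (x - a) + (1 - t) *: (x - b).
Proof. by rewrite !scalerBr [RHS]addrACA -[_ *: x + _]scalerDl subrKC scale1r opprD. Qed.

Lemma leeD2_shift (R : realDomainType) (a b : \bar R) (A B A' B' : R) :
  B - A = B' - A' -> (a + A%:E <= b + B%:E)%E = (a + A'%:E <= b + B'%:E)%E.
Proof.
move=> e; rewrite -(@leeD2rE _ (A' - A)%:E) // -!addeA -!EFinD subrKC.
by have -> : B + (A' - A) = B' by lra.
Qed.

Section ExtendedSum.
Context {R : realType} {H : normedModType R}.

Lemma convex_strongly_convexD (m : R) (psi : H -> \bar R) (h : H -> R) :
  convex_ext psi -> strongly_convex m (EFin \o h) ->
  strongly_convex m (fun z => psi z + (h z)%:E)%E.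
Proof.
move=> psi_cvx h_sc a b t t01; rewrite -addeA.
apply: le_trans (leeD (psi_cvx a b t t01) (h_sc a b t t01)) _.
by rewrite /= !muleDr ?fin_num_adde_defl // addeACA.
Qed.

Lemma lower_semicontinuousD_continuous (psi : H -> \bar R) (h : H -> R) :
  lower_semicontinuous psi -> continuous h ->
  lower_semicontinuous (fun z => psi z + (h z)%:E)%E.
Proof.
move=> psi_lsc h_cont z a ha.
have [b [e [e0 [psi_b ab]]]] :
    exists b e, 0 < e /\ (b%:E < psi z)%E /\ a <= b + h z - e.
  move: ha; case: (psi z) => [p| |] //= ha.
  - rewrite -EFinD lte_fin in ha.
    exists (p - (p + h z - a) / 2), ((p + h z - a) / 2).
    by split; [lra | split; [rewrite lte_fin; lra | lra]].
  - by exists (a - h z + 1), 1; split => //; split; [exact: ltry | lra].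
have [V Vz psiV] := psi_lsc z b psi_b.
have h_near : \forall y \near z, h z - e < h y.
  move/cvgrPdist_lt: (h_cont z) => /(_ e e0); apply: filterS => y.
  by have := ler_norm (h z - h y); lra.
exists (V `&` [set y | h z - e < h y]); first exact: filterI.
move=> y [/psiV + /= hy]; case: (psi y) => [p| |] //=.
- by rewrite -EFinD !lte_fin; lra.
- by move=> _; rewrite addye ?ltry.
Qed.

End ExtendedSum.

(* Strong convexity along [z0, y], at the point at distance r/2 from z0, gives
   Gy - G0 > (m/4) D^2 - 2D/r for D = |y - z0| >= r; the minimum of the
   right-hand side over D is -4/(m r^2). *)
Lemma strong_convexity_lower_bound (R : realFieldType) (m r D t G0 Gy : R) :
  0 < m -> 0 < r -> r <= D -> t * D = r / 2 ->
  G0 - 1 < t * Gy + (1 - t) * G0 - m / 2 * (t * (1 - t)) * D ^+ 2 ->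
  G0 - 1 - 4 / (m * r ^+ 2) <= Gy.
Proof.
move=> m0 r0 rD tD h; have D0 : 0 < D by lra.
have [m_neq0 r_neq0 D_neq0] : [/\ m != 0, r != 0 & D != 0] by rewrite !lt0r_neq0.
have t_le : t <= 2^-1 by rewrite -(ler_pM2r D0) tD; lra.
have growth : -1 + m / 4 * (r / 2) * D < t * (Gy - G0).
  have : 0 <= m * (t * D) * D * (2^-1 - t).
    by rewrite tD; apply: mulr_ge0; [apply: mulr_ge0; [apply: mulr_ge0|]|]; lra.
  by rewrite -tD; lra.
have rescale : Gy - G0 = 2 * D / r * (t * (Gy - G0)).
  have tE : t = r / (2 * D) by apply: (mulIf D_neq0); rewrite tD; field.
  by rewrite tE; field; rewrite D_neq0 r_neq0.
have lhsE : 2 * D / r * (-1 + m / 4 * (r / 2) * D) = m / 4 * D ^+ 2 - 2 * D / r.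
  by field.
have : m / 4 * D ^+ 2 - 2 * D / r < Gy - G0.
  by rewrite rescale -lhsE ltr_pM2l ?divr_gt0 ?mulr_gt0.
have sqE : m / 4 * D ^+ 2 - 2 * D / r + 4 / (m * r ^+ 2) =
           m / 4 * (D - 4 / (m * r)) ^+ 2.
  by field; rewrite m_neq0 r_neq0.
have : 0 <= m / 4 * (D - 4 / (m * r)) ^+ 2 by rewrite mulr_ge0 ?sqr_ge0 //; lra.
lra.
Qed.

Lemma le_of_forall_convex_gap (R : realFieldType) (a b K : R) : 0 <= K ->
  (forall t, 0 < t < 1 -> a <= t * b + (1 - t) * a - t * (1 - t) * K) ->
  a + K <= b.
Proof.
move=> K0 gap; apply/ler_addgt0Pr => e e0.
pose t := e / (e + K + 1).
have t0 : 0 < t by rewrite divr_gt0 //; lra.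
have t1 : t < 1 by rewrite ltr_pdivrMr; lra.
have tK : t * K <= e by rewrite mulrAC ler_pdivrMr; nra.
have : t * (a + K - b - t * K) <= 0 by have := gap t (andb_true_intro (conj t0 t1)); lra.
by rewrite pmulr_rle0 //; lra.
Qed.

Section StronglyConvexMinimization.
Context {R : realType} {H : normedModType R} {m : R} {f : H -> \bar R}.
Hypotheses (m_gt0 : 0 < m) (f_ninfty : forall x, f x != -oo%E)
  (f_lsc : lower_semicontinuous f) (f_sc : strongly_convex m f).

Lemma strongly_convex_fin {a b : H} {t A B : R} :
  0 < t < 1 -> f a = A%:E -> f b = B%:E ->
  (f (t *: a + (1 - t) *: b)%R <=
     (t * A + (1 - t) * B - m / 2 * (t * (1 - t)) * `|a - b| ^+ 2)%:E)%E.
Proof.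
move=> t01 fa fb; have := f_sc a b t t01; rewrite fa fb -!EFinM -EFinD.
by rewrite EFinB leeBrDr.
Qed.

Lemma strongly_convex_bounded_below {z0 : H} {G0 : R} : f z0 = G0%:E ->
  exists L, forall z, (L%:E <= f z)%E.
Proof.
move=> fz0; have fz0_gt : ((G0 - 1)%:E < f z0)%E by rewrite fz0 lte_fin; lra.
have [V /nbhs_ballP[r /= r0 rV] fV] := f_lsc _ _ fz0_gt.
have f_ball y : `|y - z0| < r -> ((G0 - 1)%:E < f y)%E.
  by move=> yz0; apply/fV/rV; rewrite -ball_normE /= distrC.
exists (G0 - 1 - 4 / (m * r ^+ 2)) => y.
case fy: (f y) => [Gy| |]; last by have := f_ninfty y; rewrite fy.
  2: exact: leey.
rewrite lee_fin.
have [yz0|ryz0] := ltP `|y - z0| r.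
  have : 0 <= 4 / (m * r ^+ 2) by rewrite divr_ge0 // mulr_ge0 ?sqr_ge0 // ltW.
  by move: (f_ball y yz0); rewrite fy lte_fin; lra.
have D0 : 0 < `|y - z0| by lra.
set t := r / (2 * `|y - z0|).
have t0 : 0 < t by rewrite divr_gt0 ?mulr_gt0.
have t1 : t < 1 by rewrite ltr_pdivrMr ?mulr_gt0 //; lra.
have tD : t * `|y - z0| = r / 2 by rewrite /t; field; rewrite gt_eqF.
apply: (@strong_convexity_lower_bound _ m r _ t G0 Gy m_gt0 r0 ryz0 tD).
have : ((G0 - 1)%:E < f (t *: y + (1 - t) *: z0)%R)%E.
  apply: f_ball; rewrite distrC subr_affine subrr scaler0 addr0 normrZ gtr0_norm //.
  by rewrite distrC tD; lra.
move/lt_le_trans/(_ (strongly_convex_fin (andb_true_intro (conj t0 t1)) fy fz0)).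
by rewrite lte_fin.
Qed.

Lemma strongly_convex_midpoint {L : R} {a b : H} {A B : R} :
  (forall z, (L%:E <= f z)%E) -> f a = A%:E -> f b = B%:E ->
  m / 8 * `|a - b| ^+ 2 <= (A + B) / 2 - L.
Proof.
move=> fL fa fb; have half : 0 < (2^-1 : R) < 1 by apply/andP; split; lra.
by have := le_trans (fL _) (strongly_convex_fin half fa fb); rewrite lee_fin; lra.
Qed.

Lemma strongly_convex_minimizing_cauchy {i : R} {s : nat -> H} :
  (forall z, (i%:E <= f z)%E) ->
  (forall n, exists2 r, f (s n) = r%:E & r < i + n.+1%:R^-1) ->
  cauchy_ex (s @ \oo).
Proof.
move=> i_le s_min e e0.
have me0 : 0 < m * e ^+ 2 / 8 by rewrite divr_gt0 ?mulr_gt0 ?exprn_gt0.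
have [N _ s_tail] := near_infty_natSinv_lt (PosNum me0).
exists (s N), N => // n /= Nn; rewrite -ball_normE /=.
have [rN fN rN_lt] := s_min N; have [rn fn rn_lt] := s_min n.
have := strongly_convex_midpoint i_le fN fn.
have := s_tail N (leqnn N); have := s_tail n Nn; rewrite /=.
move: N.+1%:R^-1 n.+1%:R^-1 rN_lt rn_lt => eN en rN_lt rn_lt en_lt eN_lt mid.
rewrite -(ltr_pXn2r (_ : (0 < 2)%N)) ?nnegrE ?normr_ge0 ?ltW //.
by rewrite -(ltr_pM2l (_ : 0 < m / 8)) ?divr_gt0 //; lra.
Qed.

Lemma strongly_convex_argmin_growth :
  argmin f = [set y | forall z, (f y + (m / 2 * `|y - z| ^+ 2)%:E <= f z)%E].
Proof.
apply/seteqP; split => y /= ymin z; last first.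
  apply: (le_trans _ (ymin z)); apply: leeDl.
  by rewrite lee_fin mulr_ge0 ?sqr_ge0 ?divr_ge0 ?ltW.
case fy: (f y) => [Gy| |]; last by have := f_ninfty y; rewrite fy.
  case fz: (f z) => [Gz| |]; [ | exact: leey | by have := f_ninfty z; rewrite fz].
  rewrite -EFinD lee_fin (distrC y z).
  apply: le_of_forall_convex_gap; first by rewrite mulr_ge0 ?sqr_ge0 ?divr_ge0 ?ltW.
  move=> t t01; have := le_trans (ymin _) (strongly_convex_fin t01 fz fy).
  by rewrite fy lee_fin; lra.
by rewrite addye // -fy.
Qed.

Lemma strongly_convex_argmin_uniq {z0 : H} {G0 : R} {y1 y2 : H} :
  f z0 = G0%:E -> argmin f y1 -> argmin f y2 -> y1 = y2.
Proof.
move=> fz0 y1min y2min.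
have [G1 fy1] : exists G1, f y1 = G1%:E.
  by move: (y1min z0) (f_ninfty y1); rewrite fz0; case: (f y1) => [G1| |] //; exists G1.
rewrite strongly_convex_argmin_growth in y1min.
have := le_trans (y1min y2) (y2min y1); rewrite fy1 -EFinD lee_fin => growth.
have : m / 2 * `|y1 - y2| ^+ 2 <= 0 by lra.
rewrite pmulr_rle0 ?divr_gt0 //.
by move=> n0; apply/eqP; rewrite -subr_eq0 -normr_eq0 -sqrf_eq0 eq_le n0 sqr_ge0.
Qed.

End StronglyConvexMinimization.

Section StronglyConvexArgmin.
Context {R : realType} {H : completeNormedModType R} {m : R} {f : H -> \bar R}
  {z0 : H} {G0 : R}.
Hypotheses (m_gt0 : 0 < m) (f_ninfty : forall x, f x != -oo%E)
  (f_lsc : lower_semicontinuous f) (f_sc : strongly_convex m f)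
  (fz0 : f z0 = G0%:E).

Lemma strongly_convex_argmin_exists : exists y, argmin f y.
Proof.
have [L fL] := strongly_convex_bounded_below m_gt0 f_ninfty f_lsc f_sc fz0.
pose S := [set r : R | exists z, f z = r%:E].
have S_inf : has_inf S.
  split; first by exists G0, z0.
  by exists L => r [z fz]; move: (fL z); rewrite fz lee_fin.
pose i := inf S.
have i_le z : (i%:E <= f z)%E.
  case fz: (f z) => [r| |]; [ | exact: leey | by have := f_ninfty z; rewrite fz].
  by rewrite lee_fin; apply: (ge_inf S_inf.2); exists z.
have /choice[s s_min] :
    forall n, exists z, exists2 r, f z = r%:E & r < i + n.+1%:R^-1.
  move=> n.
  have n_gt0 : 0 < n.+1%:R^-1 :> R by rewrite invr_gt0.
  have [r [z fz] r_lt] := inf_adherent n_gt0 S_inf.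
  by exists z; exists r.
have s_cvg : cvg (s @ \oo).
  apply/cauchy_cvgP/cauchy_exP.
  exact: (strongly_convex_minimizing_cauchy (H := H) m_gt0 f_sc i_le s_min).
exists (lim (s @ \oo)) => z; apply: le_trans (i_le z).
rewrite leNgt; apply/negP => i_lt.
have [a [ia fa]] : exists a, i < a /\ (a%:E < f (lim (s @ \oo)))%E.
  move: i_lt; case: (f (lim (s @ \oo))) => [G| |] // i_lt.
  - by exists ((i + G) / 2); rewrite !lte_fin in i_lt *; split; lra.
  - by exists (i + 1); split; [lra | exact: ltry].
have [V Vlim fV] := f_lsc _ _ fa.
have ai0 : 0 < a - i by lra.
have s_in_V : \forall n \near \oo, V (s n) := s_cvg V Vlim.
have [n [Vsn n_lt]] := filter_ex (filterI s_in_V (near_infty_natSinv_lt (PosNum ai0))).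
have [r fsn r_lt] := s_min n.
have r_lt_a : r < a by rewrite (lt_trans r_lt) // addrC -ltrBrDr.
by move: (fV _ Vsn); rewrite fsn lte_fin ltNge (ltW r_lt_a).
Qed.

Lemma strongly_convex_argmin_set1 : exists y, argmin f = [set y].
Proof.
have [y ymin] := strongly_convex_argmin_exists.
exists y; apply/seteqP; split => [y' y'min | _ ->] //=.
exact: (strongly_convex_argmin_uniq m_gt0 f_ninfty f_sc fz0 y'min ymin).
Qed.

End StronglyConvexArgmin.

Section InnerProduct.
Context {R : realType} {H : normedModType R} {ip : H -> H -> R}.
Hypothesis ipP : is_inner_product ip.

Lemma ipC x y : ip x y = ip y x. Proof. by case: ipP. Qed.

Lemma ipDZl a x y z : ip (a *: x + y) z = a * ip x z + ip y z.
Proof. by case: ipP => _ []. Qed.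

Lemma sqr_norm_ip x : `|x| ^+ 2 = ip x x. Proof. by case: ipP => _ []. Qed.

Lemma ip0l z : ip 0 z = 0.
Proof.
have h := ipDZl 1 0 0 z; rewrite scaler0 addr0 mul1r in h.
by apply: (addrI (ip 0 z)); rewrite addr0 -h.
Qed.

Lemma ipZl a x z : ip (a *: x) z = a * ip x z.
Proof. by rewrite -[a *: x]addr0 ipDZl ip0l addr0. Qed.

Lemma ipDl x y z : ip (x + y) z = ip x z + ip y z.
Proof. by rewrite -[x]scale1r ipDZl mul1r scale1r. Qed.

Lemma ipNl x z : ip (- x) z = - ip x z.
Proof. by rewrite -scaleN1r ipZl mulN1r. Qed.

Lemma ipZr a x z : ip z (a *: x) = a * ip z x.
Proof. by rewrite ipC ipZl ipC. Qed.

Lemma ipDr x y z : ip z (x + y) = ip z x + ip z y.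
Proof. by rewrite ipC ipDl !(ipC z). Qed.

Lemma ipNr x z : ip z (- x) = - ip z x.
Proof. by rewrite ipC ipNl ipC. Qed.

Lemma sqr_norm_affine (a b : H) (t : R) :
  `|t *: a + (1 - t) *: b| ^+ 2 =
    t * `|a| ^+ 2 + (1 - t) * `|b| ^+ 2 - t * (1 - t) * `|a - b| ^+ 2.
Proof.
rewrite !sqr_norm_ip !(ipDl, ipDr, ipNl, ipNr, ipZl, ipZr) (ipC b a); ring.
Qed.

Lemma sqr_norm_resolvent (d : R) (x y z : H) :
  `|(d + 1) *: x - d *: y - z| ^+ 2 - `|(d + 1) *: x - d *: y - y| ^+ 2 =
    (d + 1) * (`|x - z| ^+ 2 - `|x - y| ^+ 2) - d * `|y - z| ^+ 2.
Proof.
rewrite !sqr_norm_ip !(ipDl, ipDr, ipNl, ipNr, ipZl, ipZr).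
rewrite (ipC y x) (ipC z x) (ipC z y); ring.
Qed.

Lemma prox_quadratic_strongly_convex (d : R) (x : H) :
  strongly_convex d (fun z => ((d + 1) / 2 * `|x - z| ^+ 2 - 2^-1 * `|z| ^+ 2)%:E).
Proof.
move=> a b t _; rewrite -!EFinM -!EFinD lee_fin.
rewrite subr_affine !sqr_norm_affine.
have -> : x - a - (x - b) = b - a by rewrite opprB addrC addrA subrK.
rewrite (distrC b a); lra.
Qed.

Lemma resolvent_Prox1 (phi : H -> \bar R) (d : R) (x : H) :
  op_inv (op_add_scaled_id (op_inv (Prox 1 phi)) d) ((d + 1) *: x) =
  [set y | forall z, (phi y + ((d + 1) / 2 * `|x - y| ^+ 2)%:E
                        + (d / 2 * `|y - z| ^+ 2)%:E
                      <= phi z + ((d + 1) / 2 * `|x - z| ^+ 2)%:E)%E].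
Proof.
have objE y z :
  (phi y + ((2 * 1)^-1 * `|(d + 1) *: x - d *: y - y| ^+ 2)%:E
     <= phi z + ((2 * 1)^-1 * `|(d + 1) *: x - d *: y - z| ^+ 2)%:E)%E =
  (phi y + ((d + 1) / 2 * `|x - y| ^+ 2)%:E + (d / 2 * `|y - z| ^+ 2)%:E
     <= phi z + ((d + 1) / 2 * `|x - z| ^+ 2)%:E)%E.
  by rewrite -addeA -EFinD; apply: leeD2_shift; have := sqr_norm_resolvent d x y z; lra.
apply/seteqP; split => y /=.
- case=> u yu ue z; rewrite -objE.
  by have -> : (d + 1) *: x - d *: y = u by rewrite -ue addrK.
- move=> y_growth; exists ((d + 1) *: x - d *: y); last by rewrite subrK.
  by move=> z; rewrite objE.
Qed.

End InnerProduct.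

Lemma continuous_sqr_norm (R : realType) (V : normedModType R) :
  continuous (fun v : V => `|v| ^+ 2).
Proof.
move=> v; apply: (@continuous_comp _ _ _ (@Num.norm _ V) (fun r : R => r ^+ 2)).
  exact: norm_continuous.
exact: exprn_continuous.
Qed.

Lemma prox_quadratic_continuous (R : realType) (H : normedModType R)
    (d : R) (x : H) :
  continuous (fun z : H => (d + 1) / 2 * `|x - z| ^+ 2 - 2^-1 * `|z| ^+ 2).
Proof.
move=> z; apply: cvgB; apply: cvgM; try exact: cvg_cst; last exact: continuous_sqr_norm.
apply: (@continuous_comp _ _ _ (fun z => x - z) (fun v => `|v| ^+ 2)).
  by apply: cvgB; [exact: cvg_cst | exact: cvg_id].
exact: continuous_sqr_norm.
Qed.

Lemma Prox1_scaled_argmin (R : realType) (H : normedModType R)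
    (phi : H -> \bar R) (c : R) (x : H) : 0 < c ->
  Prox 1 (fun z => (phi z * (c^-1)%:E)%E) x =
  argmin (fun z => (phi z + (c / 2 * `|x - z| ^+ 2)%:E)%E).
Proof.
move=> c0; have objE u r :
    (u * (c^-1)%:E + ((2 * 1)^-1 * r)%:E = (u + (c / 2 * r)%:E) * (c^-1)%:E)%E.
  rewrite muleDl ?fin_num_adde_defl // -EFinM; congr (_ + _%:E).
  by field; rewrite gt_eqF.
have c_inv : (0 < (c^-1)%:E)%E by rewrite lte_fin invr_gt0.
by apply/seteqP; split => y /= ymin z; move: (ymin z); rewrite !objE lee_pmul2r.
Qed.

Theorem theorem2 (R : realType) (H : completeNormedModType R)
  (ip : H -> H -> R) (Hip : is_inner_product ip)
  (phi : H -> \bar R) (phi_ninfty : forall x, phi x != -oo%E)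
  (Hphi : Gamma0 (fun x => (phi x + (2^-1 * `|x| ^+ 2)%:E)%E)) :
  forall delta : R, 0 < delta ->
  forall x : H, exists y : H,
    Prox 1 (fun z => (phi z * ((delta + 1)^-1)%:E)%E) x = [set y] /\
    op_inv (op_add_scaled_id (op_inv (Prox 1 phi)) delta)
      ((delta + 1) *: x) = [set y].
Proof.
move=> d d0 x.
case: Hphi => [[_ [z0 psi_z0]] [psi_lsc psi_cvx]].
pose q z := (d + 1) / 2 * `|x - z| ^+ 2 - 2^-1 * `|z| ^+ 2.
pose g z := (phi z + ((d + 1) / 2 * `|x - z| ^+ 2)%:E)%E.
have gE : g = fun z => (phi z + (2^-1 * `|z| ^+ 2)%:E + (q z)%:E)%E.
  by apply/funext => z; rewrite /g -addeA -EFinD /q; congr (_ + _%:E); ring.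
have g_ninfty z : g z != -oo%E by rewrite /g; case: (phi z) (phi_ninfty z).
have [G0 gz0] : exists G0, g z0 = G0%:E.
  by move: psi_z0 (phi_ninfty z0); rewrite /g; case: (phi z0) => [p| |] // _ _; eexists.
have g_sc : strongly_convex d g.
  rewrite gE; apply: convex_strongly_convexD => //.
  exact: prox_quadratic_strongly_convex Hip d x.
have g_lsc : lower_semicontinuous g.
  rewrite gE; apply: lower_semicontinuousD_continuous => //.
  exact: prox_quadratic_continuous.
have [y gy] := strongly_convex_argmin_set1 d0 g_ninfty g_lsc g_sc gz0.
exists y; split; first by rewrite Prox1_scaled_argmin ?addr_gt0.
rewrite (resolvent_Prox1 Hip).
by move: gy; rewrite (strongly_convex_argmin_growth d0 g_ninfty g_sc).
Qed.
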